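(* The doctrine of variations $\Psi_{\mathbf{PAsm}}$ satisfies the Type-theoretic Church's Thesis $(\mathbf{TCT})$.
   Context: $\mathbf{PAsm}$ is the category of partitioned assemblies (pairs $(P,T)$, $P$ a set, $T:P\to\mathbb N$; arrows functions tracked by an index of a partial recursive function). $\Psi_{\mathbf{PAsm}}$ is its doctrine of variations: $A\mapsto$ poset reflection of $\mathbf{PAsm}/A$, with reindexing by weak pullback; it is an arithmetic weak hyperdoctrine with parameterized natural number object $\mathbf N=(\mathbb N,\mathrm{id})$. Let $T:\mathbf N^3\to\mathbf N$, $U:\mathbf N\to\mathbf N$ represent Kleene's primitive recursive T-predicate (0/1-valued) and output function. For a weak exponential $W$ of $\mathbf N$ with $\mathbf N$ with weak evaluation $ev:W\times\mathbf N\to\mathbf N$, put $\overline{ev}(e,x,y,f):=(T(e,x,y)=_{\mathbf N}s(0))\wedge(U(y)=_{\mathbf N}ev(f,x))$ and $\mathbf{Rec}(f):=\exists e:\mathbf N.\forall x:\mathbf N.\exists y:\mathbf N.\overline{ev}(e,x,y,f)$, using the equality, conjunction and quantifiers of the doctrine. $(\mathbf{TCT})$ holds if $\vdash\forall f:W.\mathbf{Rec}(f)$ for some such weak exponential. *)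

From Stdlib Require Import Arith List.
Import ListNotations.

Definition cpair (x y : nat) : nat := (x + y) * (x + y + 1) / 2 + y.

Inductive code : Type :=
| cZero : code
| cSucc : code
| cProj : nat -> code
| cComp : code -> list code -> code
| cPrec : code -> code -> code
| cMu   : code -> code.

Inductive eval : code -> list nat -> nat -> Prop :=
| ev_zero : forall l, eval cZero l 0
| ev_succ : forall x l, eval cSucc (x :: l) (S x)
| ev_proj : forall i l, i < length l -> eval (cProj i) l (nth i l 0)
| ev_comp : forall f gs l ys v,
    Forall2 (fun g y => eval g l y) gs ys -> eval f ys v -> eval (cComp f gs) l v
| ev_prec0 : forall f g l v, eval f l v -> eval (cPrec f g) (0 :: l) v
| ev_precS : forall f g n l w v,
    eval (cPrec f g) (n :: l) w -> eval g (n :: w :: l) v ->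
    eval (cPrec f g) (S n :: l) v
| ev_mu : forall f l n,
    eval f (n :: l) 0 ->
    (forall m, m < n -> exists k, eval f (m :: l) (S k)) ->
    eval (cMu f) l n.

Fixpoint encode (c : code) : nat :=
  match c with
  | cZero => cpair 0 0
  | cSucc => cpair 1 0
  | cProj i => cpair 2 i
  | cComp f gs =>
      cpair 3 (cpair (encode f)
        ((fix enc_list (l : list code) : nat :=
            match l with
            | nil => 0
            | g :: l' => S (cpair (encode g) (enc_list l'))
            end) gs))
  | cPrec f g => cpair 4 (cpair (encode f) (encode g))
  | cMu f => cpair 5 (encode f)
  end.

(* phi e x v : the e-th unary partial recursive function converges on x
   with value v (indices that do not code a program are nowhere defined). *)
Definition phi (e x v : nat) : Prop :=
  exists c, encode c = e /\ eval c [x] v.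

Record pasm : Type := PAsmObj { car : Type ; tr : car -> nat }.

Definition tracked (A B : pasm) (f : car A -> car B) : Prop :=
  exists e, forall a, phi e (tr A a) (tr B (f a)).

Record arr (A B : pasm) : Type := Arr { fn :> car A -> car B ; fn_tr : tracked A B fn }.
Arguments fn {A B} _ _.

Definition one : pasm := PAsmObj unit (fun _ => 0).
Definition prodP (A B : pasm) : pasm :=
  PAsmObj (car A * car B) (fun p => cpair (tr A (fst p)) (tr B (snd p))).
Definition NN : pasm := PAsmObj nat (fun n => n).

(* Psi(A) is the poset reflection of PAsm/A; we work with the preorder  *)
(* PAsm/A itself (the order of the reflection is the same).            *)

Record pred (A : pasm) : Type := Pred { dom : pasm ; proj : car dom -> car A }.
Arguments dom {A} _.
Arguments proj {A} _ _.

Definition leq {A : pasm} (a b : pred A) : Prop :=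
  exists h : car (dom a) -> car (dom b),
    tracked (dom a) (dom b) h /\ forall x, proj b (h x) = proj a x.

Definition top (A : pasm) : pred A := Pred A A (fun a => a).

Definition reindex {G D : pasm} (f : car G -> car D) (a : pred D) : pred G :=
  Pred G (PAsmObj {p : car G * car (dom a) | f (fst p) = proj a (snd p)}
                  (fun p => cpair (tr G (fst (proj1_sig p))) (tr (dom a) (snd (proj1_sig p)))))
       (fun p => fst (proj1_sig p)).

Definition andP {A : pasm} (a b : pred A) : pred A :=
  Pred A (PAsmObj {p : car (dom a) * car (dom b) | proj a (fst p) = proj b (snd p)}
                  (fun p => cpair (tr (dom a) (fst (proj1_sig p))) (tr (dom b) (snd (proj1_sig p)))))
       (fun p => proj a (fst (proj1_sig p))).

Definition eqdiag (A : pasm) : pred (prodP A A) := Pred (prodP A A) A (fun a => (a, a)).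

Definition eqP {G A : pasm} (t s : car G -> car A) : pred G :=
  @reindex G (prodP A A) (fun g => (t g, s g)) (eqdiag A).

Definition existsP {G B : pasm} (a : pred (prodP G B)) : pred G :=
  Pred G (dom a) (fun x => fst (proj a x)).

(* universal quantifier along the projection G x B -> G: weak dependent
   product; elements are a point g, a section s of alpha over {g} x B and an
   index e tracking s; realized by <tr g, e>. *)
Definition forall_carrier {G B : pasm} (a : pred (prodP G B)) : Type :=
  { g : car G &
    { s : forall b : car B, { x : car (dom a) | proj a x = (g, b) } &
      { e : nat | forall b, phi e (tr B b) (tr (dom a) (proj1_sig (s b))) } } }.

Definition forallP {G B : pasm} (a : pred (prodP G B)) : pred G :=
  Pred G (PAsmObj (forall_carrier a)
                  (fun w => cpair (tr G (projT1 w)) (proj1_sig (projT2 (projT2 w)))))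
       (fun w => projT1 w).

Definition provable (a : pred one) : Prop := leq (top one) a.

Definition is_weak_exp (W : pasm) (ev : arr (prodP W NN) NN) : Prop :=
  forall (X : pasm) (g : arr (prodP X NN) NN),
    exists h : arr X W, forall x n, ev (h x, n) = g (x, n).

Definition N3 : pasm := prodP (prodP NN NN) NN.

Definition kleene_TU (T : arr N3 NN) (U : arr NN NN) : Prop :=
  (forall e x y, T ((e, x), y) = 0 \/ T ((e, x), y) = 1) /\
  (forall e x v, phi e x v <-> exists y, T ((e, x), y) = 1 /\ U y = v).

(* contexts:  1 x W  (f),  then e, x, y : N *)
Definition ctx1 (W : pasm) := prodP one W.
Definition ctx2 (W : pasm) := prodP (ctx1 W) NN.
Definition ctx3 (W : pasm) := prodP (ctx2 W) NN.
Definition ctx4 (W : pasm) := prodP (ctx3 W) NN.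

(* ev-bar(e,x,y,f) := (T(e,x,y) = s(0)) /\ (U(y) = ev(f,x)) *)
Definition evbar (T : arr N3 NN) (U : arr NN NN) (W : pasm)
    (ev : arr (prodP W NN) NN) : pred (ctx4 W) :=
  andP (@eqP (ctx4 W) NN
          (fun p => T ((snd (fst (fst p)), snd (fst p)), snd p))
          (fun _ => S 0))
       (@eqP (ctx4 W) NN
          (fun p => U (snd p))
          (fun p => ev (snd (fst (fst (fst p))), snd (fst p)))).

(* forall f : W. Rec(f) = forall f. exists e. forall x. exists y. evbar *)
Definition all_Rec (T : arr N3 NN) (U : arr NN NN) (W : pasm)
    (ev : arr (prodP W NN) NN) : pred one :=
  @forallP one W (@existsP (ctx1 W) NN (@forallP (ctx2 W) NN
     (@existsP (ctx3 W) NN (evbar T U W ev)))).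

Definition TCT (T : arr N3 NN) (U : arr NN NN) : Prop :=
  exists (W : pasm) (ev : arr (prodP W NN) NN),
    is_weak_exp W ev /\ provable (all_Rec T U W ev).

(* The weak exponential is the object of indices e for which T(e,x,-) has a witness for
   every x, evaluated by U at the least witness; it is weakly universal because every
   tracked g : X x N -> N gets, uniformly in the realizer of x, an index of g(x,-) by the
   s-m-n construction.  A realizer of [forall f. Rec(f)] takes e := f itself: the least
   witness y is found by unbounded search, and s-m-n turns the resulting program in
   (f, x) into an index depending computably on f. *)

From Stdlib Require Import Arith Lia List ConstructiveEpsilon Classical.
Import ListNotations.

(** * The Goedel numbering is injective and evaluation is deterministic *)

Fixpoint triangle (n : nat) : nat := match n with 0 => 0 | S m => S m + triangle m end.

Lemma cpair_triangle x y : cpair x y = triangle (x + y) + y.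
Proof.
  unfold cpair. f_equal.
  assert (H : triangle (x + y) * 2 = (x + y) * (x + y + 1)).
  { induction (x + y) as [|s IH]; cbn; [reflexivity | nia]. }
  now rewrite <- H, Nat.div_mul.
Qed.

Lemma triangle_lt a b : a < b -> triangle a + a < triangle b.
Proof. induction 1; cbn; lia. Qed.

Lemma cpair_inj x y x' y' : cpair x y = cpair x' y' -> x = x' /\ y = y'.
Proof.
  rewrite !cpair_triangle. intro H.
  destruct (lt_eq_lt_dec (x + y) (x' + y')) as [[Hl|He]|Hl].
  - pose proof (triangle_lt _ _ Hl). lia.
  - rewrite He in H. lia.
  - pose proof (triangle_lt _ _ Hl). lia.
Qed.

Fixpoint encode_inj (c : code) : forall d, encode c = encode d -> c = d.
Proof.
  destruct c as [| |i|f gs|f g|f]; intros [| |i'|f' gs'|f' g'|f'] H; cbn [encode] in H;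
    try (apply cpair_inj in H as [H _]; discriminate H); try reflexivity.
  - apply cpair_inj in H as [_ H]. now subst.
  - apply cpair_inj in H as [_ H]. apply cpair_inj in H as [Hf Hgs].
    apply encode_inj in Hf. subst f'. f_equal.
    revert gs' Hgs. induction gs as [|g gs IH]; intros [|g' gs'] Hgs; try discriminate; auto.
    injection Hgs as Hgs. apply cpair_inj in Hgs as [Hg Hgs].
    apply encode_inj in Hg. subst. f_equal. now apply IH.
  - apply cpair_inj in H as [_ H]. apply cpair_inj in H as [Hf Hg].
    apply encode_inj in Hf. apply encode_inj in Hg. now subst.
  - apply cpair_inj in H as [_ H]. apply encode_inj in H. now subst.
Qed.

(* A fixpoint rather than [induction]: the induction principle of [eval] gives no
   hypothesis for the evaluations nested inside [Forall2]. *)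
Fixpoint eval_det c l v (H : eval c l v) {struct H} : forall v', eval c l v' -> v = v'.
Proof.
  destruct H as [| | |f gs l ys v Hgs Hf|f g l v Hf|f g n l w v Hrec Hg|f l n Hz Hlt];
    intros v' H'; inversion H' as [| | |? ? ? ys' ? Hgs' Hf'|? ? ? ? Hf'
                                  |? ? ? ? w' ? Hrec' Hg'|? ? ? Hz' Hlt']; subst.
  - reflexivity.
  - reflexivity.
  - reflexivity.
  - assert (ys = ys') as <-.
    { clear H' Hf Hf'. revert ys' Hgs'.
      induction Hgs as [|g y gs ys Hg Hgs IH]; intros ys' Hgs';
        inversion Hgs' as [|? y' ? ys'' Hg' Hgs'']; subst.
      - reflexivity.
      - f_equal; [exact (eval_det _ _ _ Hg _ Hg') | now apply IH]. }
    exact (eval_det _ _ _ Hf _ Hf').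
  - exact (eval_det _ _ _ Hf _ Hf').
  - pose proof (eval_det _ _ _ Hrec _ Hrec') as <-. exact (eval_det _ _ _ Hg _ Hg').
  - destruct (lt_eq_lt_dec n v') as [[Hl|He]|Hl]; [| exact He |].
    + destruct (Hlt' _ Hl) as [k Hk]. discriminate (eval_det _ _ _ Hz _ Hk).
    + destruct (Hlt _ Hl) as [k Hk]. discriminate (eval_det _ _ _ Hk _ Hz').
Qed.

Lemma phi_functional e x v v' : phi e x v -> phi e x v' -> v = v'.
Proof.
  intros [c [<- Hv]] [c' [Hc' Hv']]. apply encode_inj in Hc' as ->. eauto using eval_det.
Qed.

(* The point [a0] is needed to extract the program from its index. *)
Lemma tracked_code A B (f : car A -> car B) (a0 : car A) :
  tracked A B f -> exists c, forall a, eval c [tr A a] (tr B (f a)).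
Proof.
  intros [e He]. destruct (He a0) as [c0 [Hc0 _]]. exists c0. intro a.
  destruct (He a) as [c [Hc Hv]]. rewrite <- Hc0 in Hc. now apply encode_inj in Hc as ->.
Qed.

Fixpoint const_code (n : nat) : code :=
  match n with 0 => cZero | S m => cComp cSucc [const_code m] end.

Lemma eval_comp1 f g l y v : eval g l y -> eval f [y] v -> eval (cComp f [g]) l v.
Proof. eauto using eval. Qed.

Lemma eval_comp2 f g1 g2 l y1 y2 v :
  eval g1 l y1 -> eval g2 l y2 -> eval f [y1; y2] v -> eval (cComp f [g1; g2]) l v.
Proof. eauto using eval. Qed.

Lemma eval_comp3 f g1 g2 g3 l y1 y2 y3 v :
  eval g1 l y1 -> eval g2 l y2 -> eval g3 l y3 -> eval f [y1; y2; y3] v ->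
  eval (cComp f [g1; g2; g3]) l v.
Proof. eauto using eval. Qed.

Lemma eval_succ x : eval cSucc [x] (S x).
Proof. constructor. Qed.

Lemma eval_const n l : eval (const_code n) l n.
Proof. induction n; cbn; eauto using eval, eval_comp1, eval_succ. Qed.

Lemma eval_proj0 a l : eval (cProj 0) (a :: l) a.
Proof. exact (ev_proj 0 (a :: l) ltac:(cbn; lia)). Qed.

Lemma eval_proj1 a b l : eval (cProj 1) (a :: b :: l) b.
Proof. exact (ev_proj 1 (a :: b :: l) ltac:(cbn; lia)). Qed.

Lemma eval_proj2 a b c l : eval (cProj 2) (a :: b :: c :: l) c.
Proof. exact (ev_proj 2 (a :: b :: c :: l) ltac:(cbn; lia)). Qed.

Definition add_code : code := cPrec (cProj 0) (cComp cSucc [cProj 1]).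

Lemma eval_add a b : eval add_code [a; b] (a + b).
Proof.
  induction a; cbn; econstructor; eauto using eval_proj0, eval_comp1, eval_proj1, eval_succ.
Qed.

Definition triangle_code : code :=
  cPrec cZero (cComp add_code [cComp cSucc [cProj 0]; cProj 1]).

Lemma eval_triangle s : eval triangle_code [s] (triangle s).
Proof.
  induction s; cbn.
  - repeat constructor.
  - eapply ev_precS; [exact IHs|].
    eauto using eval_comp2, eval_comp1, eval_proj0, eval_succ, eval_proj1, eval_add.
Qed.

Definition pair_code : code := cComp add_code [cComp triangle_code [add_code]; cProj 1].

Lemma eval_pair g1 g2 l x y :
  eval g1 l x -> eval g2 l y -> eval (cComp pair_code [g1; g2]) l (cpair x y).
Proof.
  intros Hx Hy. apply (eval_comp2 _ _ _ _ _ _ _ Hx Hy).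
  rewrite cpair_triangle.
  eauto using eval_comp2, eval_comp1, eval_add, eval_triangle, eval_proj1.
Qed.

Definition not_code : code := cPrec (const_code 1) (const_code 0).

(* Least [y] with [c(y, l) = 1], for [c] taking only the values 0 and 1 below it. *)
Definition find_one_code (c : code) : code := cMu (cComp not_code [c]).

Lemma eval_find_one c l (r : nat -> nat) m :
  (forall y, eval c (y :: l) (r y)) -> r m = 1 -> (forall k, k < m -> r k = 0) ->
  eval (find_one_code c) l m.
Proof.
  intros Hc Hm Hbelow. constructor.
  - eapply eval_comp1; [apply Hc|]. rewrite Hm.
    eapply ev_precS; constructor; apply eval_const.
  - intros k Hk. exists 0. eapply eval_comp1; [apply Hc|]. rewrite Hbelow by exact Hk.
    constructor. apply eval_const.
Qed.

(** * Programs computing indices: the s-m-n theorem *)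

Lemma encode_comp1 F X :
  encode (cComp F [X]) = cpair 3 (cpair (encode F) (S (cpair (encode X) 0))).
Proof. reflexivity. Qed.

Lemma encode_comp2 F X Y :
  encode (cComp F [X; Y]) =
  cpair 3 (cpair (encode F) (S (cpair (encode X) (S (cpair (encode Y) 0))))).
Proof. reflexivity. Qed.

(* Otherwise proof search below unfolds [cpair] and [encode] on concrete codes. *)
Opaque cpair encode.

Definition comp1_index_code (F D : code) : code :=
  cComp pair_code [const_code 3; cComp pair_code [const_code (encode F);
    cComp cSucc [cComp pair_code [D; const_code 0]]]].

Lemma eval_comp1_index F D X l :
  eval D l (encode X) -> eval (comp1_index_code F D) l (encode (cComp F [X])).
Proof.
  intro HD. rewrite encode_comp1.
  eauto using eval_pair, eval_const, eval_comp1, eval_succ.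
Qed.

Definition comp2_index_code (F D1 D2 : code) : code :=
  cComp pair_code [const_code 3; cComp pair_code [const_code (encode F);
    cComp cSucc [cComp pair_code [D1; cComp cSucc [cComp pair_code [D2; const_code 0]]]]]].

Lemma eval_comp2_index F D1 D2 X Y l :
  eval D1 l (encode X) -> eval D2 l (encode Y) ->
  eval (comp2_index_code F D1 D2) l (encode (cComp F [X; Y])).
Proof.
  intros HD1 HD2. rewrite encode_comp2.
  eauto 10 using eval_pair, eval_const, eval_comp1, eval_succ.
Qed.

Definition const_index_code : code :=
  cPrec (const_code (encode cZero)) (comp1_index_code cSucc (cProj 1)).

Lemma eval_const_index k : eval const_index_code [k] (encode (const_code k)).
Proof.
  induction k; cbn.
  - constructor. apply eval_const.
  - eapply ev_precS; [exact IHk|]. apply eval_comp1_index, eval_proj1.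
Qed.

Definition curry (F : code) (k : nat) : code := cComp F [const_code k; cProj 0].

Lemma eval_curry F k x v : eval F [k; x] v -> eval (curry F k) [x] v.
Proof. eauto using eval_comp2, eval_const, eval_proj0. Qed.

Definition smn_code (F : code) : code :=
  comp2_index_code F const_index_code (const_code (encode (cProj 0))).

Lemma eval_smn F k : eval (smn_code F) [k] (encode (curry F k)).
Proof. apply eval_comp2_index; [apply eval_const_index | apply eval_const]. Qed.

Definition eq_intro {G A : pasm} (t s : car G -> car A) (g : car G) (H : t g = s g) :
    car (dom (eqP t s)) :=
  exist _ (g, s g) (f_equal (fun v => (v, s g)) H).

Definition and_intro {A : pasm} (a b : pred A) (x : car (dom a)) (y : car (dom b))
    (H : proj a x = proj b y) : car (dom (andP a b)) :=
  exist _ (x, y) H.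

Arguments eq_intro {G A} t s & g H.
Arguments and_intro {A} a b & x y H.

(** * Kleene's T: the weak exponential and the realizer of [forall f. Rec(f)] *)

Section KleeneT.

Variables (T : arr N3 NN) (U : arr NN NN).
Hypothesis T_bool : forall e x y, T ((e, x), y) = 0 \/ T ((e, x), y) = 1.
Hypothesis phi_T_U : forall e x v, phi e x v <-> exists y, T ((e, x), y) = 1 /\ U y = v.
Variables (cT cU : code).
Hypothesis eval_cT : forall e x y, eval cT [cpair (cpair e x) y] (T ((e, x), y)).
Hypothesis eval_cU : forall y, eval cU [y] (U y).

Definition total_index (e : nat) : Prop := forall x, exists y : nat, T ((e, x), y) = 1.

Definition Wtot : pasm := PAsmObj {e | total_index e} (@proj1_sig _ _).

Definition least_witness (e x : nat) (H : exists y : nat, T ((e, x), y) = 1) : nat :=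
  proj1_sig (epsilon_smallest _ (fun y => Nat.eq_dec (T ((e, x), y)) 1) H).

Lemma least_witness_spec e x H :
  T ((e, x), least_witness e x H) = 1 /\
  forall k, T ((e, x), k) = 1 -> least_witness e x H <= k.
Proof. exact (proj2_sig (epsilon_smallest _ _ H)). Qed.

Lemma least_witness_one e x H : T ((e, x), least_witness e x H) = 1.
Proof. apply least_witness_spec. Qed.

Lemma least_witness_min e x H k : k < least_witness e x H -> T ((e, x), k) = 0.
Proof.
  intro Hk. destruct (T_bool e x k) as [|Hone]; [assumption|].
  apply (proj2 (least_witness_spec e x H)) in Hone. lia.
Qed.

Definition app (p : car (prodP Wtot NN)) : car NN :=
  U (least_witness (proj1_sig (fst p)) (snd p) (proj2_sig (fst p) (snd p))).

Definition search_code (P : code) : code := find_one_code (cComp cT [P]).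

Lemma eval_search P l e x H :
  (forall y, eval P (y :: l) (cpair (cpair e x) y)) ->
  eval (search_code P) l (least_witness e x H).
Proof.
  intro HP. apply (eval_find_one _ _ (fun y => T ((e, x), y))).
  - intro y. eapply eval_comp1; [apply HP | apply eval_cT].
  - apply least_witness_one.
  - apply least_witness_min.
Qed.

Lemma app_tracked : tracked (prodP Wtot NN) NN app.
Proof.
  set (c := cComp cU [search_code (cComp pair_code [cProj 1; cProj 0])]).
  exists (encode c). intros [w x]. exists c. split; [reflexivity|].
  eapply eval_comp1; [|apply eval_cU].
  apply eval_search. intro y. apply eval_pair; [apply eval_proj1 | apply eval_proj0].
Qed.

Definition app_arr : arr (prodP Wtot NN) NN := Arr (prodP Wtot NN) NN app app_tracked.

Lemma phi_total_index e : (forall x, exists v, phi e x v) -> total_index e.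
Proof.
  intros Htot x. destruct (Htot x) as [v Hv]. apply phi_T_U in Hv as [y [Hy _]]. eauto.
Qed.

Lemma app_phi (w : car Wtot) x v : phi (proj1_sig w) x v -> app (w, x) = v.
Proof.
  intro Hv. apply (phi_functional (proj1_sig w) x); [|exact Hv].
  apply phi_T_U. eexists. split; [apply least_witness_one | reflexivity].
Qed.

Definition fiber_code (cg : code) (k : nat) : code := cComp cg [curry pair_code k].

Lemma Wtot_weak_exp : is_weak_exp Wtot app_arr.
Proof.
  intros X g. destruct (classic (inhabited (car X))) as [[x0]|Hempty].
  2: { exists (Arr X Wtot (fun x => False_rect _ (Hempty (inhabits x)))
                 (ex_intro _ 0 (fun x => False_ind _ (Hempty (inhabits x))))).
       intro x. exfalso. exact (Hempty (inhabits x)). }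
  destruct (tracked_code _ _ g (x0, 0) (fn_tr _ _ g)) as [cg Hcg].
  assert (Hfiber : forall x n, phi (encode (fiber_code cg (tr X x))) n (g (x, n))).
  { intros x n. eexists. split; [reflexivity|].
    eapply eval_comp1; [|exact (Hcg (x, n))].
    apply eval_pair; [apply eval_const | apply eval_proj0]. }
  set (h x := exist total_index (encode (fiber_code cg (tr X x)))
                (phi_total_index _ (fun n => ex_intro _ _ (Hfiber x n)))).
  assert (Hh : tracked X Wtot h).
  { set (c := comp1_index_code cg (smn_code pair_code)).
    exists (encode c). intro x. exists c. split; [reflexivity|].
    apply eval_comp1_index, eval_smn. }
  exists (Arr X Wtot h Hh). intros x n. exact (app_phi (h x) n _ (Hfiber x n)).
Qed.

Definition rec_matrix : pred (ctx4 Wtot) := evbar T U Wtot app_arr.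

Definition rec_inner : pred (ctx2 Wtot) :=
  @forallP (ctx2 Wtot) NN (@existsP (ctx3 Wtot) NN rec_matrix).

(* The point (f, e := f, x, y := least witness) of [rec_matrix]. *)
Definition rec_witness (f : car Wtot) (x : nat) : car (dom rec_matrix) :=
  let y := least_witness (proj1_sig f) x (proj2_sig f x) in
  let p : car (ctx4 Wtot) := ((((tt, f), proj1_sig f), x), y) in
  and_intro _ _ (eq_intro _ _ p (least_witness_one _ _ _)) (eq_intro _ _ p eq_refl) eq_refl.

(* On arguments [y; e; x] builds the realizer of [rec_witness]. *)
Definition rec_witness_body : code :=
  let p := cComp pair_code [cComp pair_code [cComp pair_code [cComp pair_code
             [const_code 0; cProj 1]; cProj 1]; cProj 2]; cProj 0] in
  cComp pair_code [cComp pair_code [p; const_code 1];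
                   cComp pair_code [p; cComp cU [cProj 0]]].

Definition rec_witness_code : code :=
  cComp rec_witness_body
    [search_code (cComp pair_code [cComp pair_code [cProj 1; cProj 2]; cProj 0]);
     cProj 0; cProj 1].

Lemma eval_rec_witness (f : car Wtot) x :
  eval rec_witness_code [proj1_sig f; x] (tr (dom rec_matrix) (rec_witness f x)).
Proof.
  eapply eval_comp3; [| apply eval_proj0 | apply eval_proj1 |].
  - apply eval_search. intro y.
    eauto using eval_pair, eval_proj0, eval_proj1, eval_proj2.
  - cbn. eauto 15 using eval_pair, eval_const, eval_proj0, eval_proj1, eval_proj2, eval_comp1.
Qed.

Definition rec_section (f : car Wtot) : car (dom rec_inner) :=
  existT _ ((tt, f), proj1_sig f)
    (existT _ (fun x => exist _ (rec_witness f x) eq_refl)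
       (exist _ (encode (curry rec_witness_code (proj1_sig f)))
          (fun x => ex_intro _ _ (conj eq_refl (eval_curry _ _ _ _ (eval_rec_witness f x)))))).

Definition rec_section_code : code :=
  cComp pair_code [cComp pair_code [cComp pair_code [const_code 0; cProj 0]; cProj 0];
                   smn_code rec_witness_code].

Lemma phi_rec_section (f : car Wtot) :
  phi (encode rec_section_code) (tr Wtot f) (tr (dom rec_inner) (rec_section f)).
Proof.
  eexists. split; [reflexivity|]. cbn.
  apply eval_pair; [|apply eval_smn].
  apply eval_pair; [|apply eval_proj0]. apply eval_pair; [apply eval_const | apply eval_proj0].
Qed.

Lemma all_Rec_provable : provable (all_Rec T U Wtot app_arr).
Proof.
  exists (fun _ => existT _ tt (existT _ (fun f => exist _ (rec_section f) eq_refl)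
                   (exist _ (encode rec_section_code) phi_rec_section))).
  split; [|now intros []].
  exists (encode (const_code (cpair 0 (encode rec_section_code)))). intro a.
  eexists. split; [reflexivity | apply eval_const].
Qed.

End KleeneT.

Theorem proposition4p8 :
  forall (T : arr N3 NN) (U : arr NN NN), kleene_TU T U -> TCT T U.
Proof.
  intros T U [T_bool phi_T_U].
  destruct (tracked_code N3 NN T ((0, 0), 0) (fn_tr _ _ T)) as [cT HcT].
  destruct (tracked_code NN NN U 0 (fn_tr _ _ U)) as [cU HcU].
  set (eval_cT e x y := HcT ((e, x), y)).
  exists (Wtot T), (app_arr T U T_bool cT cU eval_cT HcU). split.
  - apply Wtot_weak_exp, phi_T_U.
  - apply all_Rec_provable.
Qed.
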